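(* Let $G$ be a finite $p$-group with Frattini subgroup $\Phi(G)$, let $d\ge 1$ and let $w\in F_d$ be a word whose word map $\tilde w:G^d\to G$ is not surjective. Then $w(G)\subseteq \Phi(G)$.
   Context: $F_d$ is the free group on $d$ letters. For $w\in F_d$ and a group $G$, the word map $\tilde w:G^d\to G$ is evaluation of $w$ on $d$-tuples, and $w(G)$ denotes its image. *)

From mathcomp Require Import all_boot all_fingroup all_solvable.
Set Implicit Arguments. Unset Strict Implicit. Unset Printing Implicit Defensive.
Import GroupScope.

(* Elements of the free group F_d, represented by group terms in the
   d letters x_0, ..., x_{d-1}.  Every element of F_d is represented by
   such a term and the word map only depends on the represented element. *)
Inductive word (d : nat) : Type :=
  | WVar of 'I_d
  | WOne
  | WMul of word d & word d
  | WInv of word d.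

Fixpoint eval_word (gT : finGroupType) (d : nat) (x : 'I_d -> gT) (w : word d)
  : gT :=
  match w with
  | WVar i => x i
  | WOne => 1
  | WMul u v => eval_word x u * eval_word x v
  | WInv u => (eval_word x u)^-1
  end.

Definition word_image (gT : finGroupType) (d : nat) (G : {set gT}) (w : word d)
  : {set gT} :=
  [set g | [exists x : {ffun 'I_d -> gT},
              [forall i, x i \in G] && (g == eval_word x w)]].

Definition word_map_surjective (gT : finGroupType) (d : nat) (G : {set gT})
  (w : word d) : Prop := G \subset word_image G w.

From mathcomp Require Import all_boot all_fingroup all_solvable.
Import GroupScope.

Set Implicit Arguments.
Unset Strict Implicit.
Unset Printing Implicit Defensive.

(* Let e_i be the exponent sum of x_i in w.  If p does not divide some e_i,
   substituting a suitable power of g for x_i and 1 for the other letters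
   shows that g is a value of w, so the word map is surjective.  Otherwise,
   modulo Phi(G) the word map becomes x |-> prod_i x_i^e_i in the elementary
   abelian p-group G / Phi(G), which is trivial since p divides every e_i. *)

(* The exponent sum of x_i in w, modulo n: an inverse contributes
   n - e %% n rather than -e, so only its residue mod n is meaningful. *)
Fixpoint exp_sum_mod (n : nat) {d : nat} (i : 'I_d) (w : word d) : nat :=
  match w with
  | WVar j => j == i
  | WOne => 0
  | WMul u v => exp_sum_mod n i u + exp_sum_mod n i v
  | WInv u => n - exp_sum_mod n i u %% n
  end.

Lemma expgV_mod (gT : finGroupType) (h : gT) n a :
  0 < n -> h ^+ n = 1 -> (h ^+ a)^-1 = h ^+ (n - a %% n).
Proof.
move=> n_gt0 hn; rewrite -(expg_mod a hn).
have le_an : a %% n <= n by rewrite ltnW // ltn_mod.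
by apply: (mulgI (h ^+ (a %% n))); rewrite mulgV -expgD subnKC.
Qed.

Section EvalWord.

Variables (gT : finGroupType) (d : nat).
Implicit Types (x : 'I_d -> gT) (w : word d).

Lemma eval_word_mem (G : {group gT}) x w :
  (forall j, x j \in G) -> eval_word x w \in G.
Proof.
move=> xG; elim: w => [j||u uG v vG|u uG] /=.
all: by rewrite ?xG ?group1 ?groupM ?groupV.
Qed.

Lemma eval_word_ext x y w : x =1 y -> eval_word x w = eval_word y w.
Proof. by move=> eq_xy; elim: w => [j||u /= -> v ->|u /= ->] /=. Qed.

Lemma eval_word1 w : eval_word (fun _ => 1 : gT) w = 1.
Proof. by elim: w => //= [u -> v ->|u ->]; rewrite ?mulg1 ?invg1. Qed.

Lemma morph_eval_word (rT : finGroupType) (D : {group gT})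
    (f : {morphism D >-> rT}) x w :
  (forall j, x j \in D) -> f (eval_word x w) = eval_word (f \o x) w.
Proof.
move=> xD; elim: w => [j||u IHu v IHv|u IHu] /=; first by [].
- exact: morph1.
- by rewrite morphM ?eval_word_mem // IHu IHv.
- by rewrite morphV ?eval_word_mem // IHu.
Qed.

End EvalWord.

Section AbelianEval.

Variables (gT : finGroupType) (A : {group gT}) (n d : nat).
Hypotheses (abA : abelian A) (n_gt0 : 0 < n).
Implicit Types (x : 'I_d -> gT) (w : word d).

Lemma eval_word_abelian_split x i w :
    (forall j, x j \in A) -> x i ^+ n = 1 ->
  eval_word x w =
    eval_word (fun j => if j == i then 1 else x j) w * x i ^+ exp_sum_mod n i w.
Proof.
move=> xA xin; set y := fun j => _.
have yA j : y j \in A by rewrite /y; case: (j == i); rewrite ?group1.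
have cAA a b : a \in A -> b \in A -> commute a b.
  by move=> aA bA; apply: (centsP abA).
elim: w => [j||u IHu v IHv|u IHu] /=.
- by rewrite /y; case: eqP => [->|_]; rewrite ?mul1g ?mulg1.
- by rewrite mulg1.
- rewrite IHu IHv expgD !mulgA; congr (_ * _); rewrite -!mulgA; congr (_ * _).
  by apply: cAA; rewrite ?groupX ?eval_word_mem.
- rewrite IHu invMg (expgV_mod _ n_gt0 xin).
  by apply: cAA; rewrite ?groupX ?groupV ?eval_word_mem.
Qed.

Lemma eval_word_abelian_eq1 x w :
    (forall j, x j \in A) -> (forall j, x j ^+ n = 1) ->
    (forall j, x j ^+ exp_sum_mod n j w = 1) ->
  eval_word x w = 1.
Proof.
move=> xA xn xe.
suff vanish s : uniq s -> eval_word (fun j => if j \in s then x j else 1) w = 1.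
  rewrite -(vanish (enum 'I_d)) ?enum_uniq //.
  by apply: eval_word_ext => j; rewrite mem_enum.
elim: s => [_|k s IHs /= /andP [k_notin_s uniq_s]]; first exact: eval_word1.
rewrite (eval_word_abelian_split (i := k)); first last.
- by rewrite mem_head.
- by move=> j; case: ifP; rewrite ?group1.
rewrite mem_head xe mulg1 -[RHS](IHs uniq_s); apply: eval_word_ext => j.
rewrite in_cons; case: eqP => [->|_] //=.
by rewrite (negPf k_notin_s).
Qed.

End AbelianEval.

Lemma eval_word_single (gT : finGroupType) n d (i : 'I_d) (h : gT) w :
  0 < n -> h ^+ n = 1 ->
  eval_word (fun j => if j == i then h else 1) w = h ^+ exp_sum_mod n i w.
Proof.
move=> n_gt0 hn; rewrite (eval_word_abelian_split (cycle_abelian h) n_gt0 (i := i)).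
- rewrite eqxx (@eval_word_ext _ _ _ (fun _ => 1)) ?eval_word1 ?mul1g // => j.
  by case: (j == i).
- by move=> j; case: (j == i); rewrite ?cycle_id ?group1.
- by rewrite eqxx.
Qed.

Lemma word_map_surjective_coprime (gT : finGroupType) (G : {group gT}) d
    (w : word d) (i : 'I_d) :
  coprime #|G| (exp_sum_mod #|G| i w) -> word_map_surjective G w.
Proof.
move=> co_Ge; apply/subsetP => g gG.
set h := g ^+ expg_invn G (exp_sum_mod #|G| i w).
have hG : h \in G by rewrite groupX.
rewrite inE; apply/existsP; exists [ffun j => if j == i then h else 1].
apply/andP; split.
  by apply/forallP => j; rewrite ffunE; case: (j == i); rewrite ?group1.
rewrite (@eval_word_ext _ _ _ (fun j => if j == i then h else 1)); last first.
  by move=> j; rewrite ffunE.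
by rewrite (eval_word_single _ _ (cardG_gt0 G) (expg_cardG hG)) expgAC expgK.
Qed.

Lemma word_image_sub_normal (gT : finGroupType) (G H : {group gT}) d
    (w : word d) :
    H <| G -> abelian (G / H) ->
    (forall i, exponent (G / H) %| exp_sum_mod #|G| i w) ->
  word_image G w \subset H.
Proof.
move=> /andP [_ nHG] abGH expGH_dvd; apply/subsetP => g.
rewrite inE => /existsP [x /andP [/forallP xG /eqP ->]].
have xN j : x j \in 'N(H) by apply: (subsetP nHG).
apply: coset_idr; first exact: eval_word_mem.
rewrite (morph_eval_word (coset_morphism H)) //.
apply: (eval_word_abelian_eq1 abGH (cardG_gt0 G)) => /= j.
- exact: mem_quotient.
- by rewrite -morphX // expg_cardG // morph1.
- by apply/exponentP: (mem_quotient H (xG j)).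
Qed.

Theorem lemma3p1 (gT : finGroupType) (G : {group gT}) (p : nat) (d : nat)
  (w : word d) :
  prime p -> p.-group G -> (1 <= d)%N ->
  ~ word_map_surjective G w ->
  word_image G w \subset 'Phi(G).
Proof.
move=> p_pr pG _ not_surj.
have [k cardG] := p_natP pG.
have := Phi_quotient_abelem pG; rewrite abelemE // => /andP [abGPhi expGPhi].
apply: word_image_sub_normal (Phi_normal G) abGPhi _ => i.
apply: dvdn_trans expGPhi _; apply/idPn => p_ndvd_e; apply: not_surj.
apply: (word_map_surjective_coprime (i := i)).
by rewrite {1}cardG coprimeXl // prime_coprime.
Qed.
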